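(* Let $(U,A)$ be a cocommutative left bialgebroid (respectively cocommutative left Hopf algebroid) over a commutative algebra $A$, and let $R$ be a commutative left $U$-module algebra. Then the smash product $R\#U$ is a cocommutative left bialgebroid (respectively cocommutative left Hopf algebroid) over $R$, with source and target $r\mapsto r\#1$, comultiplication $R\otimes_AU\xrightarrow{R\otimes_A\Delta}R\otimes_AU\otimes_AU\cong(R\otimes_AU)\otimes_R(R\otimes_AU)$ and counit $R\otimes_AU\xrightarrow{R\otimes_A\varepsilon}R\otimes_AA\cong R$.
   Context: A cocommutative left bialgebroid over a commutative $\Bbbk$-algebra $A$ is a left bialgebroid $(U,A,\Delta,\varepsilon,s,t)$ with $s=t$ and $\mathrm{tw}\circ\Delta=\Delta$; concretely $U$ is a $\Bbbk$-algebra with an algebra map $s\colon A\to U$, a coassociative, counital, multiplicative, unital $\Delta\colon U\to U\otimes_AU$ (tensor over left multiplication by $s(A)$; $\Delta$ lands in the subspace where $u_{(1)}s(a)\otimes u_{(2)}=u_{(1)}\otimes u_{(2)}s(a)$), and a counit $\varepsilon\colon U\to A$, $A$-linear with $\varepsilon(uv)=\varepsilon(u\,s(\varepsilon(v)))$. It is a left Hopf algebroid if $\beta\colon U\otimes_AU\to U\otimes_AU$, $u\otimes v\mapsto u_{(1)}\otimes u_{(2)}v$ (domain tensor over right multiplication on the first factor and left on the second) is bijective. A left $U$-module algebra $R$ is an algebra with a left $U$-module structure (then an $A$-algebra via $a\mapsto s(a)\cdot1$ in the commutative case) with $u\cdot(rr')=(u_{(1)}\cdot r)(u_{(2)}\cdot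 r')$, $u\cdot1_R=\varepsilon(u)\cdot1_R$, $(r\cdot a)r'=r(a\cdot r')$. The smash product $R\#U=R\otimes_AU$ has product $(r\#u)(r'\#u')=r(u_{(1)}\cdot r')\#u_{(2)}u'$ and unit $1\#1$. *)

(* Tensor products over a commutative ring are modelled by
   formal sums (seq of pairs) modulo the relation "every balanced biadditive
   map into every abelian group takes the same value", which is exactly
   equality in the tensor product. *)
From HB Require Import structures.
From mathcomp Require Import all_boot all_order all_algebra.
Set Implicit Arguments. Unset Strict Implicit. Unset Printing Implicit Defensive.
Import GRing.Theory.
Local Open Scope ring_scope.

(* f : V -> W -> G is balanced over scalars K acting on V by aV (on the
   right, written as an operator) and on W by aW; eV, eW are the equalities
   (equivalences) of V and W. *)
Definition balanced2 (K V W : Type) (eV : V -> V -> Prop) (eW : W -> W -> Prop)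
  (addV : V -> V -> V) (addW : W -> W -> W) (aV : K -> V -> V) (aW : K -> W -> W)
  (G : zmodType) (f : V -> W -> G) : Prop :=
  [/\ (forall x x' y, eV x x' -> f x y = f x' y),
      (forall x y y', eW y y' -> f x y = f x y'),
      (forall x x' y, f (addV x x') y = f x y + f x' y),
      (forall x y y', f x (addW y y') = f x y + f x y') &
      (forall k x y, f (aV k x) y = f x (aW k y))].

Definition tens_eq (K V W : Type) (eV : V -> V -> Prop) (eW : W -> W -> Prop)
  (addV : V -> V -> V) (addW : W -> W -> W) (aV : K -> V -> V) (aW : K -> W -> W)
  (s t : seq (V * W)) : Prop :=
  forall (G : zmodType) (f : V -> W -> G),
    balanced2 eV eW addV addW aV aW f ->
    \sum_(p <- s) f p.1 p.2 = \sum_(p <- t) f p.1 p.2.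

Definition balanced3 (K V : Type) (eV : V -> V -> Prop) (addV : V -> V -> V)
  (aV : K -> V -> V) (G : zmodType) (f : V -> V -> V -> G) : Prop :=
  (forall x x' y z, eV x x' -> f x y z = f x' y z) /\
      (forall x y y' z, eV y y' -> f x y z = f x y' z) /\
      (forall x y z z', eV z z' -> f x y z = f x y z') /\
      (forall x x' y z, f (addV x x') y z = f x y z + f x' y z) /\
      (forall x y y' z, f x (addV y y') z = f x y z + f x y' z) /\
      (forall x y z z', f x y (addV z z') = f x y z + f x y z') /\
      (forall k x y z, f (aV k x) y z = f x (aV k y) z) /\
      (forall k x y z, f x (aV k y) z = f x y (aV k z)).

Definition tens3_eq (K V : Type) (eV : V -> V -> Prop) (addV : V -> V -> V)
  (aV : K -> V -> V) (s t : seq (V * V * V)) : Prop :=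
  forall (G : zmodType) (f : V -> V -> V -> G),
    balanced3 eV addV aV f ->
    \sum_(p <- s) f p.1.1 p.1.2 p.2 = \sum_(p <- t) f p.1.1 p.1.2 p.2.

(* The carrier is a type together with an equivalence [ceq] (its equality);
   for an honest ring this is Leibniz equality, for the smash product it is
   equality in R (x)_A U. *)
Record rawbgd (B : Type) := RawBgd {
  car : Type;
  ceq : car -> car -> Prop;
  cadd : car -> car -> car;
  czero : car;
  copp : car -> car;
  cmul : car -> car -> car;
  cone : car;
  csrc : B -> car;                   (* source = target *)
  cDelta : car -> seq (car * car);   (* a representative of Delta u in car (x)_B car *)
  ceps : car -> B }.
Arguments car {B} r.
Arguments ceq {B} r _ _.
Arguments cadd {B} r _ _.
Arguments czero {B} r.
Arguments copp {B} r _.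
Arguments cmul {B} r _ _.
Arguments cone {B} r.
Arguments csrc {B} r _.
Arguments cDelta {B} r _.
Arguments ceps {B} r _.

Section Bialgebroid.
Variables (B : comPzRingType) (D : rawbgd B).
Local Notation V := (car D).
Local Notation "x ~ y" := (ceq D x y) (at level 70).
Local Notation "x +' y" := (cadd D x y) (at level 50).
Local Notation "x *' y" := (cmul D x y) (at level 40).
Local Notation s := (csrc D).
Local Notation Delta := (cDelta D).
Local Notation eps := (ceps D).

Definition lmulB (b : B) (x : V) : V := s b *' x.
Definition rmulB (b : B) (x : V) : V := x *' s b.

Definition teqD := tens_eq (ceq D) (ceq D) (cadd D) (cadd D) lmulB lmulB.
(* domain of the Galois map: first factor with right multiplication by s(B),
   second factor with left multiplication by s(B) *)
Definition teqD' := tens_eq (ceq D) (ceq D) (cadd D) (cadd D) rmulB lmulB.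
Definition teq3D := tens3_eq (ceq D) (cadd D) lmulB.

Definition vsum (l : seq V) : V := foldr (cadd D) (czero D) l.

Record cocomm_bialgebroid : Prop := {
  bg_refl : forall x, x ~ x;
  bg_sym : forall x y, x ~ y -> y ~ x;
  bg_trans : forall x y z, x ~ y -> y ~ z -> x ~ z;
  bg_add_compat : forall x x' y y', x ~ x' -> y ~ y' -> x +' y ~ x' +' y';
  bg_opp_compat : forall x x', x ~ x' -> copp D x ~ copp D x';
  bg_mul_compat : forall x x' y y', x ~ x' -> y ~ y' -> x *' y ~ x' *' y';
  bg_addA : forall x y z, x +' (y +' z) ~ (x +' y) +' z;
  bg_addC : forall x y, x +' y ~ y +' x;
  bg_add0 : forall x, czero D +' x ~ x;
  bg_addN : forall x, copp D x +' x ~ czero D;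
  bg_mulA : forall x y z, x *' (y *' z) ~ (x *' y) *' z;
  bg_mul1l : forall x, cone D *' x ~ x;
  bg_mul1r : forall x, x *' cone D ~ x;
  bg_mulDl : forall x y z, (x +' y) *' z ~ x *' z +' y *' z;
  bg_mulDr : forall x y z, x *' (y +' z) ~ x *' y +' x *' z;
  bg_src_add : forall a b, s (a + b) ~ s a +' s b;
  bg_src_mul : forall a b, s (a * b) ~ s a *' s b;
  bg_src_one : s 1 ~ cone D;
  bg_Delta_compat : forall u v, u ~ v -> teqD (Delta u) (Delta v);
  bg_Delta_add : forall u v, teqD (Delta (u +' v)) (Delta u ++ Delta v);
  bg_Delta_linl : forall a u,
    teqD (Delta (lmulB a u)) [seq (lmulB a p.1, p.2) | p <- Delta u];
  bg_Delta_linr : forall a u,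
    teqD (Delta (lmulB a u)) [seq (p.1, lmulB a p.2) | p <- Delta u];
  (* Delta lands in the Takeuchi subspace *)
  bg_takeuchi : forall a u,
    teqD [seq (rmulB a p.1, p.2) | p <- Delta u]
         [seq (p.1, rmulB a p.2) | p <- Delta u];
  bg_coassoc : forall u,
    teq3D (flatten [seq [seq (q.1, q.2, p.2) | q <- Delta p.1] | p <- Delta u])
          (flatten [seq [seq (p.1, q.1, q.2) | q <- Delta p.2] | p <- Delta u]);
  bg_Delta_mul : forall u v,
    teqD (Delta (u *' v))
         (flatten [seq [seq (p.1 *' q.1, p.2 *' q.2) | q <- Delta v] | p <- Delta u]);
  bg_Delta_one : teqD (Delta (cone D)) [:: (cone D, cone D)];
  bg_cocomm : forall u, teqD [seq (p.2, p.1) | p <- Delta u] (Delta u);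
  bg_eps_compat : forall u v, u ~ v -> eps u = eps v;
  bg_eps_add : forall u v, eps (u +' v) = eps u + eps v;
  bg_eps_lin : forall a u, eps (lmulB a u) = a * eps u;
  bg_eps_one : eps (cone D) = 1;
  bg_eps_mul : forall u v, eps (u *' v) = eps (u *' s (eps v));
  (* counitality: (eps (x) id) Delta = id and (id (x) eps) Delta = id,
     using B (x)_B V ~= V, b (x) v |-> s(b) v and V (x)_B B ~= V, v (x) b |-> t(b) v *)
  bg_counitl : forall u, vsum [seq lmulB (eps p.1) p.2 | p <- Delta u] ~ u;
  bg_counitr : forall u, vsum [seq lmulB (eps p.2) p.1 | p <- Delta u] ~ u }.

Definition beta (w : seq (V * V)) : seq (V * V) :=
  flatten [seq [seq (q.1, q.2 *' p.2) | q <- Delta p.1] | p <- w].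

Record cocomm_hopf : Prop := {
  hopf_bgd : cocomm_bialgebroid;
  hopf_beta_compat : forall w w', teqD' w w' -> teqD (beta w) (beta w');
  hopf_beta_inj : forall w w', teqD (beta w) (beta w') -> teqD' w w';
  hopf_beta_surj : forall z, exists w, teqD (beta w) z }.

End Bialgebroid.

Definition ring_raw (A : comPzRingType) (U : pzRingType) (s : A -> U)
  (Delta : U -> seq (U * U)) (eps : U -> A) : rawbgd A :=
  @RawBgd A U (@eq U) +%R 0 -%R *%R 1 s Delta eps.

Record module_algebra (A : comPzRingType) (U : pzRingType) (s : A -> U)
  (Delta : U -> seq (U * U)) (eps : U -> A) (R : comPzRingType)
  (act : U -> R -> R) : Prop := {
  ma_addl : forall u v r, act (u + v) r = act u r + act v r;
  ma_addr : forall u r r', act u (r + r') = act u r + act u r';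
  ma_one : forall r, act 1 r = r;
  ma_mul : forall u v r, act (u * v) r = act u (act v r);
  ma_rmul : forall u r r', act u (r * r') = \sum_(p <- Delta u) act p.1 r * act p.2 r';
  ma_unit : forall u, act u 1 = act (s (eps u)) 1;
  ma_bal : forall a r r', act (s a) r * r' = r * act (s a) r' }.

Section Smash.
Variables (A : comPzRingType) (U : pzRingType) (s : A -> U)
  (Delta : U -> seq (U * U)) (eps : U -> A) (R : comPzRingType)
  (act : U -> R -> R).

(* equality in R (x)_A U: r.a = s(a).r on R, a.u = s(a) u on U *)
Definition smash_eq : seq (R * U) -> seq (R * U) -> Prop :=
  tens_eq (@eq R) (@eq U) +%R +%R (fun a r => act (s a) r) (fun a u => s a * u).

(* (r # u)(r' # u') = r (u_(1) . r') # u_(2) u' *)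
Definition smash_mul (x y : seq (R * U)) : seq (R * U) :=
  flatten [seq flatten [seq [seq (p.1 * act q.1 p'.1, q.2 * p'.2) | q <- Delta p.2]
                       | p' <- y] | p <- x].

(* R (x)_A Delta followed by R (x)_A U (x)_A U ~= (R#U) (x)_R (R#U),
   r (x) u (x) v |-> (r # u) (x) (1 # v) *)
Definition smash_Delta (x : seq (R * U)) : seq (seq (R * U) * seq (R * U)) :=
  flatten [seq [seq ([:: (p.1, q.1)], [:: (1, q.2)]) | q <- Delta p.2] | p <- x].

(* R (x)_A eps followed by R (x)_A A ~= R, r (x) a |-> r.a = s(a).r *)
Definition smash_eps (x : seq (R * U)) : R :=
  \sum_(p <- x) act (s (eps p.2)) p.1.

Definition smash_raw : rawbgd R :=
  @RawBgd R (seq (R * U)) smash_eq cat [::] (map (fun p => (- p.1, p.2)))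
    smash_mul [:: (1, 1)] (fun r => [:: (r, 1)]) smash_Delta smash_eps.

End Smash.

From mathcomp Require Import all_boot all_order all_algebra.
From mathcomp Require Import ring.
From Stdlib Require Import ClassicalEpsilon.
Set Implicit Arguments. Unset Strict Implicit. Unset Printing Implicit Defensive.
Import GRing.Theory.

(* Every tensor product is handled through its balanced maps.  A map on
   (R#U) x (R#U) balanced over R is the same as a map H : R -> U -> U -> G
   balanced for R (x)_A U (x)_A U, via f |-> ((r, u, v) |-> f (r#u) (1#v)) and
   H |-> ((r#u, r'#v) |-> H (r r') u v); likewise the domain of the Galois map,
   (R#U) (x)_{R^op} (R#U), is R (x)_A U (x)_{A^op} U, now through
   (r#u, r'#v) |-> H (r (u_(1) . r')) u_(2) v.  Under these identifications
   every axiom for R#U becomes R (x)_A (the same axiom for U), and the Galois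
   map of R#U becomes R (x)_A beta_U, which is bijective whenever beta_U is:
   its inverse is assembled from chosen beta_U-preimages of the u (x) v. *)

Local Open Scope ring_scope.

Section AdditiveMaps.
Variables (V W : zmodType) (f : V -> W).
Hypothesis fD : forall x y, f (x + y) = f x + f y.

Lemma addf0 : f 0 = 0.
Proof. by apply: (addrI (f 0)); rewrite -fD !addr0. Qed.

Lemma addfN x : f (- x) = - f x.
Proof. by apply/eqP; rewrite -subr_eq0 opprK -fD addNr addf0. Qed.

Lemma addf_sum (I : Type) (r : seq I) (F : I -> V) :
  f (\sum_(i <- r) F i) = \sum_(i <- r) f (F i).
Proof. exact: (big_morph f fD addf0). Qed.

End AdditiveMaps.

Definition tsum (V W : Type) (G : zmodType) (f : V -> W -> G) (t : seq (V * W)) : G :=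
  \sum_(p <- t) f p.1 p.2.

Lemma tsum_cat (V W : Type) (G : zmodType) (f : V -> W -> G) t t' :
  tsum f (t ++ t') = tsum f t + tsum f t'.
Proof. exact: big_cat. Qed.

Lemma tsum_seq1 (V W : Type) (G : zmodType) (f : V -> W -> G) x y :
  tsum f [:: (x, y)] = f x y.
Proof. exact: big_seq1. Qed.

Lemma biadditive_expand (T1 T2 : Type) (G : zmodType) (f : seq T1 -> seq T2 -> G) :
  (forall x x' y, f (x ++ x') y = f x y + f x' y) ->
  (forall x y y', f x (y ++ y') = f x y + f x y') ->
  forall x y, f x y = \sum_(p <- x) \sum_(p' <- y) f [:: p] [:: p'].
Proof.
move=> fDl fDr.
have f0l y : f [::] y = 0 by apply: (addrI (f [::] y)); rewrite -fDl addr0.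
have f0r x : f x [::] = 0 by apply: (addrI (f x [::])); rewrite -fDr addr0.
elim=> [|p x IHx] y; first by rewrite f0l big_nil.
rewrite (fDl [:: p] x) IHx big_cons; congr (_ + _).
elim: y => [|p' y IHy]; first by rewrite f0r big_nil.
by rewrite (fDr _ [:: p'] y) IHy big_cons.
Qed.

Section SmashProduct.
Variables (A : comPzRingType) (U : pzRingType) (s : A -> U)
  (Delta : U -> seq (U * U)) (eps : U -> A).
Hypothesis HU : cocomm_bialgebroid (ring_raw s Delta eps).
Local Notation DU := (ring_raw s Delta eps).
Local Notation teqU := (@teqD _ DU).
Local Notation teqUop := (@teqD' _ DU).
Local Notation betaU := (@beta _ DU).

Definition balanced_UU (G : zmodType) (f : U -> U -> G) :=
  [/\ (forall x x' y, f (x + x') y = f x y + f x' y),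
      (forall x y y', f x (y + y') = f x y + f x y') &
      (forall a x y, f (s a * x) y = f x (s a * y))].

Lemma tsum_teqU L L' (G : zmodType) (f : U -> U -> G) :
  teqU L L' -> balanced_UU f -> tsum f L = tsum f L'.
Proof. by move=> H [h1 h2 h3]; apply: H; split=> //= [x x' y ->|x y y' ->]. Qed.

Lemma teqU_by_tsum L L' :
  (forall (G : zmodType) (f : U -> U -> G), balanced_UU f -> tsum f L = tsum f L') ->
  teqU L L'.
Proof. by move=> H G f [_ _ h3 h4 h5]; apply: H; split. Qed.

Lemma srcD a b : s (a + b) = s a + s b. Proof. exact: (bg_src_add HU). Qed.
Lemma srcM a b : s (a * b) = s a * s b. Proof. exact: (bg_src_mul HU). Qed.
Lemma src1 : s 1 = 1. Proof. exact: (bg_src_one HU). Qed.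

Section DeltaIdentities.
Variables (G : zmodType) (f : U -> U -> G).
Hypothesis fbal : balanced_UU f.

Lemma tsum_DeltaD u v : tsum f (Delta (u + v)) = tsum f (Delta u) + tsum f (Delta v).
Proof. by rewrite (tsum_teqU (bg_Delta_add HU u v) fbal) tsum_cat. Qed.

Lemma tsum_Delta_srcl a u :
  tsum f (Delta (s a * u)) = \sum_(q <- Delta u) f (s a * q.1) q.2.
Proof. by rewrite (tsum_teqU (bg_Delta_linl HU a u) fbal) /tsum big_map. Qed.

Lemma Delta_takeuchi a u :
  \sum_(q <- Delta u) f (q.1 * s a) q.2 = \sum_(q <- Delta u) f q.1 (q.2 * s a).
Proof. by have := tsum_teqU (bg_takeuchi HU a u) fbal; rewrite /tsum !big_map. Qed.

Lemma Delta_cocomm u : \sum_(q <- Delta u) f q.2 q.1 = tsum f (Delta u).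
Proof. by have := tsum_teqU (bg_cocomm HU u) fbal; rewrite /tsum !big_map. Qed.

Lemma tsum_DeltaM u v : tsum f (Delta (u * v)) =
  \sum_(p <- Delta u) \sum_(q <- Delta v) f (p.1 * q.1) (p.2 * q.2).
Proof.
rewrite (tsum_teqU (bg_Delta_mul HU u v) fbal) /tsum big_flatten big_map.
by apply: eq_bigr => p _; rewrite big_map.
Qed.

Lemma tsum_Delta1 : tsum f (Delta 1) = f 1 1.
Proof. by rewrite (tsum_teqU (bg_Delta_one HU) fbal) tsum_seq1. Qed.

End DeltaIdentities.

(* Delta (u s(a)) = u_(1) s(a) (x) u_(2), from multiplicativity and Delta (s a) = s a (x) 1 *)
Lemma tsum_Delta_srcr (G : zmodType) (f : U -> U -> G) a u : balanced_UU f ->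
  tsum f (Delta (u * s a)) = \sum_(c <- Delta u) f (c.1 * s a) c.2.
Proof.
move=> fbal; have [f1 f2 f3] := fbal.
rewrite (tsum_DeltaM fbal) exchange_big /=.
pose Xi x y := \sum_(c <- Delta u) f (c.1 * x) (c.2 * y).
have Xi_bal : balanced_UU Xi.
  split=> [x x' y|x y y'|b x y]; rewrite /Xi.
  - by rewrite -big_split; apply: eq_bigr => c _; rewrite mulrDr f1.
  - by rewrite -big_split; apply: eq_bigr => c _; rewrite mulrDr f2.
  have g_bal : balanced_UU (fun p q => f (p * x) (q * y)).
    by split=> [p p' q|p q q'|d p q]; rewrite ?mulrDl ?f1 ?f2 // -!mulrA f3.
  have /= E := Delta_takeuchi g_bal b u.
  under eq_bigr do rewrite mulrA.
  by rewrite E; apply: eq_bigr => c _; rewrite mulrA.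
have Xi_bal' : balanced_UU (fun x y => Xi (s a * x) y).
  have [x1 x2 x3] := Xi_bal.
  split=> [x x' y|x y y'|b x y]; rewrite ?mulrDr ?x1 ?x2 //.
  by rewrite mulrA -srcM mulrC srcM -mulrA x3.
transitivity (tsum Xi (Delta (s a * 1))); first by rewrite mulr1.
rewrite (tsum_Delta_srcl Xi_bal).
have := tsum_Delta1 Xi_bal'; rewrite /tsum /= => ->.
by apply: eq_bigr => c _; rewrite !mulr1.
Qed.

Definition balanced_UUU (G : zmodType) (h : U -> U -> U -> G) :=
  [/\ (forall x x' y z, h (x + x') y z = h x y z + h x' y z),
      (forall x y y' z, h x (y + y') z = h x y z + h x y' z),
      (forall x y z z', h x y (z + z') = h x y z + h x y z'),
      (forall a x y z, h (s a * x) y z = h x (s a * y) z) &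
      (forall a x y z, h x (s a * y) z = h x y (s a * z))].

Lemma Delta_coassoc (G : zmodType) (h : U -> U -> U -> G) u : balanced_UUU h ->
  \sum_(p <- Delta u) \sum_(q <- Delta p.1) h q.1 q.2 p.2 =
  \sum_(p <- Delta u) \sum_(q <- Delta p.2) h p.1 q.1 q.2.
Proof.
case=> h1 h2 h3 h4 h5.
have hbal : balanced3 (ceq DU) (cadd DU) (@lmulB _ DU) h.
  by do !split=> //; move=> ? ? ? ? /= ->.
have := bg_coassoc HU u hbal; rewrite !big_flatten !big_map.
under eq_bigr do rewrite big_map.
by under [X in _ = X -> _]eq_bigr do rewrite big_map.
Qed.

Lemma Delta_coassoc_swap (G : zmodType) (h : U -> U -> U -> G) u : balanced_UUU h ->
  \sum_(q <- Delta u) \sum_(c <- Delta q.2) h q.1 c.1 c.2 =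
  \sum_(q <- Delta u) \sum_(c <- Delta q.2) h c.1 q.1 c.2.
Proof.
move=> hbal; have [h1 h2 h3 h4 h5] := hbal.
have hbal' : balanced_UUU (fun x y z => h y x z).
  by split=> //= *; rewrite ?h1 ?h2 ?h3 // -?h4 -?h5 // h4.
rewrite -(Delta_coassoc _ hbal) -(Delta_coassoc _ hbal'); apply: eq_bigr => q _.
have h12_bal : balanced_UU (fun x y => h y x q.2) by split=> *; rewrite ?h1 ?h2 // h4.
by have := Delta_cocomm h12_bal q.1; rewrite /tsum /=.
Qed.

Lemma vsumE (l : seq U) : @vsum _ DU l = \sum_(x <- l) x.
Proof. by elim: l => [|a l IH]; rewrite ?big_nil ?big_cons //= IH. Qed.

Lemma Delta_counitl u : \sum_(q <- Delta u) s (eps q.1) * q.2 = u.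
Proof. by have := bg_counitl HU u; rewrite /= vsumE big_map. Qed.

Lemma Delta_counitr u : \sum_(q <- Delta u) s (eps q.2) * q.1 = u.
Proof. by have := bg_counitr HU u; rewrite /= vsumE big_map. Qed.

Lemma epsD u v : eps (u + v) = eps u + eps v. Proof. exact: (bg_eps_add HU). Qed.
Lemma eps_srcl a u : eps (s a * u) = a * eps u. Proof. exact: (bg_eps_lin HU). Qed.
Lemma eps1 : eps 1 = 1. Proof. exact: (bg_eps_one HU). Qed.
Lemma eps_mul u v : eps (u * v) = eps (u * s (eps v)). Proof. exact: (bg_eps_mul HU). Qed.

Definition balanced_UUop (G : zmodType) (f : U -> U -> G) :=
  [/\ (forall x x' y, f (x + x') y = f x y + f x' y),
      (forall x y y', f x (y + y') = f x y + f x y') &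
      (forall a x y, f (x * s a) y = f x (s a * y))].

Lemma tsum_teqUop L L' (G : zmodType) (f : U -> U -> G) :
  teqUop L L' -> balanced_UUop f -> tsum f L = tsum f L'.
Proof. by move=> H [h1 h2 h3]; apply: H; split=> //= [x x' y ->|x y y' ->]. Qed.

Lemma teqU_sym L L' : teqU L L' -> teqU L' L.
Proof. by move=> H G f fbal; rewrite (H G f fbal). Qed.

Lemma teqU_trans L1 L2 L3 :
  teqU L1 L2 -> teqU L2 L3 -> teqU L1 L3.
Proof. by move=> H1 H2 G f fbal; rewrite (H1 G f fbal) (H2 G f fbal). Qed.

Lemma teqU_cat L1 L2 L1' L2' : teqU L1 L1' -> teqU L2 L2' ->
  teqU (L1 ++ L2) (L1' ++ L2').
Proof. by move=> H1 H2 G f fbal; rewrite !big_cat (H1 G f fbal) (H2 G f fbal). Qed.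

Lemma teqU_addl u u' v : teqU [:: (u + u', v)] [:: (u, v); (u', v)].
Proof.
by apply: teqU_by_tsum => G f [f1 _ _]; rewrite /tsum big_seq1 !big_cons big_nil addr0 f1.
Qed.

Lemma teqU_addr u v v' : teqU [:: (u, v + v')] [:: (u, v); (u, v')].
Proof.
by apply: teqU_by_tsum => G f [_ f2 _]; rewrite /tsum big_seq1 !big_cons big_nil addr0 f2.
Qed.

Lemma teqU_bal a u v : teqU [:: (s a * u, v)] [:: (u, s a * v)].
Proof. by apply: teqU_by_tsum => G f [_ _ f3]; rewrite !tsum_seq1 f3. Qed.

Definition lscale (a : A) (L : seq (U * U)) := [seq (s a * p.1, p.2) | p <- L].

Lemma lscale_teqU a L L' : teqU L L' -> teqU (lscale a L) (lscale a L').
Proof.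
move=> H; apply: teqU_by_tsum => G f [f1 f2 f3].
have := tsum_teqU H (f := fun x y => f (s a * x) y); rewrite /tsum !big_map; apply.
split=> [x x' y|x y y'|b x y]; first by rewrite mulrDr f1.
  by rewrite f2.
by rewrite mulrA -!srcM mulrC srcM -mulrA f3.
Qed.


Lemma betaU_cat L L' : betaU (L ++ L') = betaU L ++ betaU L'.
Proof. by rewrite /beta map_cat flatten_cat. Qed.

Lemma tsum_betaU (G : zmodType) (f : U -> U -> G) L :
  tsum f (betaU L) = \sum_(p <- L) \sum_(q <- Delta p.1) f q.1 (q.2 * p.2).
Proof. by rewrite /tsum /beta big_flatten big_map; apply: eq_bigr => p _; rewrite big_map. Qed.

Lemma betaU_flatten (I : Type) (F Gs : I -> seq (U * U)) (l : seq I) :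
  (forall i, teqU (betaU (F i)) (Gs i)) ->
  teqU (betaU (flatten (map F l))) (flatten (map Gs l)).
Proof. by move=> H; elim: l => [|i l IH] //=; rewrite betaU_cat; apply: teqU_cat. Qed.

Lemma betaU_lscale a L : teqU (betaU (lscale a L)) (lscale a (betaU L)).
Proof.
apply: teqU_by_tsum => G f fbal; have [f1 f2 f3] := fbal.
rewrite tsum_betaU /lscale big_map /tsum /beta big_map big_flatten big_map.
apply: eq_bigr => p _ /=; rewrite big_map.
have g_bal : balanced_UU (fun x y => f x (y * p.2)).
  by split=> [x x' y|x y y'|b x y]; rewrite ?f1 ?mulrDl ?f2 // f3 mulrA.
by have := tsum_Delta_srcl g_bal a p.1; rewrite /tsum /=.
Qed.

Section ModuleAlgebra.
Variables (R : comPzRingType) (act : U -> R -> R).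
Hypothesis Hma : module_algebra s Delta eps act.

Definition amap (a : A) : R := act (s a) 1.

Lemma act_addl u v r : act (u + v) r = act u r + act v r. Proof. exact: (ma_addl Hma). Qed.
Lemma act_addr u r r' : act u (r + r') = act u r + act u r'. Proof. exact: (ma_addr Hma). Qed.
Lemma act_mul u v r : act (u * v) r = act u (act v r). Proof. exact: (ma_mul Hma). Qed.
Lemma act1 r : act 1 r = r. Proof. exact: (ma_one Hma). Qed.
Lemma act_rmul u r r' : act u (r * r') = \sum_(q <- Delta u) act q.1 r * act q.2 r'.
Proof. exact: (ma_rmul Hma). Qed.
Lemma act_unit u : act u 1 = amap (eps u). Proof. exact: (ma_unit Hma). Qed.

Lemma act_sumr u (I : Type) (l : seq I) F :
  act u (\sum_(i <- l) F i) = \sum_(i <- l) act u (F i).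
Proof. apply: (addf_sum (act_addr u)). Qed.

Lemma act_src a r : act (s a) r = amap a * r.
Proof. by have := ma_bal Hma a 1 r; rewrite mul1r => <-. Qed.

Lemma act_srcl a u r : act (s a * u) r = amap a * act u r.
Proof. by rewrite act_mul act_src. Qed.

Lemma act_srcr u a r : act (u * s a) r = act u (amap a * r).
Proof. by rewrite act_mul act_src. Qed.

Lemma amapD a b : amap (a + b) = amap a + amap b.
Proof. by rewrite /amap srcD act_addl. Qed.

Lemma amapM a b : amap (a * b) = amap a * amap b.
Proof. by rewrite /amap srcM act_mul act_src. Qed.

Local Notation smeq := (smash_eq s act).
Local Notation smul := (smash_mul Delta act).
Local Notation SR := (smash_raw s Delta eps act).
Local Notation sDelta := (smash_Delta Delta).
Local Notation seps := (smash_eps s eps act).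
Local Notation teqS := (@teqD _ SR).
Local Notation teqSop := (@teqD' _ SR).
Local Notation betaS := (@beta _ SR).

Definition balanced_RU (G : zmodType) (g : R -> U -> G) :=
  [/\ (forall r r' u, g (r + r') u = g r u + g r' u),
      (forall r u u', g r (u + u') = g r u + g r u') &
      (forall a r u, g (amap a * r) u = g r (s a * u))].

Lemma tsum_smeq x y (G : zmodType) (g : R -> U -> G) :
  smeq x y -> balanced_RU g -> tsum g x = tsum g y.
Proof.
move=> H [g1 g2 g3]; apply: H; split=> // [? ? ? ->|? ? ? ->|a r u] //.
by rewrite act_src g3.
Qed.

Lemma smeq_by_tsum x y :
  (forall (G : zmodType) (g : R -> U -> G), balanced_RU g -> tsum g x = tsum g y) ->
  smeq x y.
Proof. by move=> H G g [_ _ g1 g2 g3]; apply: H; split=> // a r u; rewrite -g3 act_src. Qed.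

Lemma smeq_refl x : smeq x x. Proof. by []. Qed.

Lemma smeq_sym x y : smeq x y -> smeq y x.
Proof. by move=> H G f fbal; rewrite (H G f fbal). Qed.

Lemma smeq_trans x y z : smeq x y -> smeq y z -> smeq x z.
Proof. by move=> H1 H2 G f fbal; rewrite (H1 G f fbal) (H2 G f fbal). Qed.

Lemma smeq_addl r r' u : smeq [:: (r + r', u)] [:: (r, u); (r', u)].
Proof.
by apply: smeq_by_tsum => G g [g1 _ _]; rewrite /tsum big_seq1 !big_cons big_nil addr0 g1.
Qed.

Lemma smeq_addr r u u' : smeq [:: (r, u + u')] [:: (r, u); (r, u')].
Proof.
by apply: smeq_by_tsum => G g [_ g2 _]; rewrite /tsum big_seq1 !big_cons big_nil addr0 g2.
Qed.

Lemma smeq_bal a r u : smeq [:: (amap a * r, u)] [:: (r, s a * u)].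
Proof. by apply: smeq_by_tsum => G g [_ _ g3]; rewrite !tsum_seq1 g3. Qed.

Lemma tsum_opp x (G : zmodType) (g : R -> U -> G) : balanced_RU g ->
  tsum g [seq (- p.1, p.2) | p <- x] = - tsum g x.
Proof.
case=> g1 _ _; rewrite /tsum big_map -sumrN; apply: eq_bigr => p _.
exact: (addfN (fun a b => g1 a b _)).
Qed.

Lemma smeq_cat x x' y y' : smeq x x' -> smeq y y' -> smeq (x ++ y) (x' ++ y').
Proof.
move=> Hx Hy; apply: smeq_by_tsum => G g gbal.
by rewrite !tsum_cat (tsum_smeq Hx gbal) (tsum_smeq Hy gbal).
Qed.

Lemma smeq_catC x y : smeq (x ++ y) (y ++ x).
Proof. by apply: smeq_by_tsum => G g _; rewrite !tsum_cat addrC. Qed.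

Lemma smeq_opp x x' : smeq x x' -> smeq [seq (- p.1, p.2) | p <- x] [seq (- p.1, p.2) | p <- x'].
Proof.
by move=> Hx; apply: smeq_by_tsum => G g gbal; rewrite !tsum_opp // (tsum_smeq Hx gbal).
Qed.

Lemma smeq_catN x : smeq ([seq (- p.1, p.2) | p <- x] ++ x) [::].
Proof.
by apply: smeq_by_tsum => G g gbal; rewrite tsum_cat tsum_opp // addNr /tsum big_nil.
Qed.

(** * Multiplication of R # U *)

Lemma big_smul (G : zmodType) (F : R * U -> G) x y : \sum_(p <- smul x y) F p =
  \sum_(p <- x) \sum_(p' <- y) \sum_(q <- Delta p.2) F (p.1 * act q.1 p'.1, q.2 * p'.2).
Proof.
rewrite /smash_mul big_flatten big_map; apply: eq_bigr => p _.
by rewrite big_flatten big_map; apply: eq_bigr => p' _; rewrite big_map.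
Qed.

Lemma tsum_smul (G : zmodType) (g : R -> U -> G) x y : tsum g (smul x y) =
  \sum_(p <- x) \sum_(p' <- y) \sum_(q <- Delta p.2) g (p.1 * act q.1 p'.1) (q.2 * p'.2).
Proof. exact: big_smul. Qed.

Lemma balanced_RU_UU (G : zmodType) (g : R -> U -> G) c r' v : balanced_RU g ->
  balanced_UU (fun a b => g (c * act a r') (b * v)).
Proof.
case=> g1 g2 g3; split=> [x x' z|x z z'|a x z].
- by rewrite act_addl mulrDr g1.
- by rewrite mulrDl g2.
- by rewrite act_srcl mulrA (mulrC c) -(mulrA (amap a)) g3 mulrA.
Qed.

Lemma smul_scalarl c y : smeq (smul [:: (c, 1)] y) [seq (c * p.1, p.2) | p <- y].
Proof.
apply: smeq_by_tsum => G g gbal; rewrite tsum_smul big_seq1 /tsum big_map.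
apply: eq_bigr => p _ /=.
by have := tsum_Delta1 (balanced_RU_UU c p.1 p.2 gbal); rewrite /tsum => ->; rewrite act1 mul1r.
Qed.

Lemma smeq_scalar_src r a u : smeq [:: (r, s a * u)] (smul [:: (amap a, 1)] [:: (r, u)]).
Proof. by apply: smeq_sym; apply: smeq_trans (smul_scalarl _ _) _; apply: smeq_bal. Qed.

Lemma smul_scalarr r u a : smeq (smul [:: (r, u)] [:: (amap a, 1)]) [:: (r, u * s a)].
Proof.
apply: smeq_by_tsum => G g gbal; have [g1 g2 g3] := gbal.
rewrite tsum_smul !big_seq1 tsum_seq1 /=.
transitivity (\sum_(q <- Delta u) (fun x y => g (r * act x 1) (y * 1)) (q.1 * s a) q.2).
  by apply: eq_bigr => q _; rewrite /= act_srcr !mulr1.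
rewrite (Delta_takeuchi (balanced_RU_UU r 1 1 gbal)) /=.
transitivity (\sum_(q <- Delta u) g r (s (eps q.1) * q.2 * s a)).
  by apply: eq_bigr => q _; rewrite act_unit !mulr1 mulrC g3 mulrA.
by rewrite -(addf_sum (fun a b => g2 _ a b)) -mulr_suml Delta_counitl.
Qed.

Lemma smul_eql x x' y : smeq x x' -> smeq (smul x y) (smul x' y).
Proof.
move=> Hx; apply: smeq_by_tsum => G g gbal; rewrite !tsum_smul.
have [g1 g2 g3] := gbal.
apply: (tsum_smeq Hx (g := fun r u =>
  \sum_(p' <- y) \sum_(q <- Delta u) g (r * act q.1 p'.1) (q.2 * p'.2))).
split=> [r r' u|r u u'|a r u]; rewrite -?big_split; apply: eq_bigr => p' _.
- by rewrite -big_split; apply: eq_bigr => q _; rewrite mulrDl g1.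
- exact: (tsum_DeltaD (balanced_RU_UU r p'.1 p'.2 gbal)).
- have := tsum_Delta_srcl (balanced_RU_UU r p'.1 p'.2 gbal) a u; rewrite /tsum /= => ->.
  by apply: eq_bigr => q _; rewrite act_srcl mulrA (mulrC r) -mulrA.
Qed.

Lemma smul_eqr x y y' : smeq y y' -> smeq (smul x y) (smul x y').
Proof.
move=> Hy; apply: smeq_by_tsum => G g gbal; rewrite !tsum_smul.
have [g1 g2 g3] := gbal.
rewrite exchange_big [RHS]exchange_big /=.
apply: (tsum_smeq Hy (g := fun r' v =>
  \sum_(p <- x) \sum_(q <- Delta p.2) g (p.1 * act q.1 r') (q.2 * v))).
split=> [r r' u|r u u'|a r u]; rewrite -?big_split; apply: eq_bigr => p _.
- by rewrite -big_split; apply: eq_bigr => q _; rewrite act_addr mulrDr g1.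
- by rewrite -big_split; apply: eq_bigr => q _; rewrite mulrDr g2.
- under eq_bigr do rewrite -act_srcr.
  have /= -> := Delta_takeuchi (balanced_RU_UU p.1 r u gbal) a p.2.
  by apply: eq_bigr => q _; rewrite mulrA.
Qed.

Lemma smul_eq x x' y y' : smeq x x' -> smeq y y' -> smeq (smul x y) (smul x' y').
Proof. by move=> Hx Hy; apply: smeq_trans (smul_eql _ Hx) (smul_eqr _ Hy). Qed.

Lemma smulA x y z : smeq (smul x (smul y z)) (smul (smul x y) z).
Proof.
apply: smeq_by_tsum => G g gbal; have [g1 g2 g3] := gbal.
rewrite /tsum !big_smul; apply: eq_bigr => p _.
rewrite big_smul /=; apply: eq_bigr => p' _.
rewrite [RHS]exchange_big; apply: eq_bigr => p'' _ /=.
set r := p.1; set u := p.2; set r' := p'.1; set v := p'.2; set r'' := p''.1; set w := p''.2.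
pose Phi x y z := \sum_(c <- Delta v) g (r * act x r' * act (y * c.1) r'') (z * (c.2 * w)).
have Phi_bal : balanced_UUU Phi.
  split=> [x0 x1 y0 z0|x0 y0 y1 z0|x0 y0 z0 z1|a x0 y0 z0|a x0 y0 z0];
    rewrite /Phi -?big_split; apply: eq_bigr => c _.
  - by rewrite act_addl mulrDr mulrDl g1.
  - by rewrite mulrDl act_addl mulrDr g1.
  - by rewrite mulrDl g2.
  - by rewrite -(mulrA (s a)) !act_srcl; congr (g _ _); ring.
  - rewrite -(mulrA (s a)) act_srcl.
    rewrite (_ : _ * (amap a * _) = amap a * (r * act x0 r' * act (y0 * c.1) r'')); last by ring.
    by rewrite g3 mulrA.
transitivity (\sum_(q <- Delta u) \sum_(e <- Delta q.1) Phi e.1 e.2 q.2).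
  rewrite exchange_big; apply: eq_bigr => q _ /=; rewrite /Phi exchange_big.
  apply: eq_bigr => c _ /=; rewrite act_rmul mulr_sumr.
  rewrite (addf_sum (fun t1 t2 => g1 t1 t2 _)); apply: eq_bigr => e _.
  by rewrite act_mul !mulrA.
rewrite (Delta_coassoc _ Phi_bal); apply: eq_bigr => q _ /=.
have := tsum_DeltaM (balanced_RU_UU (r * act q.1 r') r'' w gbal) q.2 v.
rewrite /tsum /Phi /= => ->.
by apply: eq_bigr => a _; apply: eq_bigr => c _; rewrite mulrA.
Qed.

Lemma smul1l x : smeq (smul [:: (1, 1)] x) x.
Proof.
apply: smeq_trans (smul_scalarl _ _) _; apply: smeq_by_tsum => G g _.
by rewrite /tsum big_map; apply: eq_bigr => p _; rewrite mul1r.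
Qed.

Lemma smul1r x : smeq (smul x [:: (1, 1)]) x.
Proof.
apply: smeq_by_tsum => G g [g1 g2 g3]; rewrite tsum_smul; apply: eq_bigr => p _.
rewrite big_seq1 /=.
transitivity (\sum_(q <- Delta p.2) g p.1 (s (eps q.1) * q.2)).
  by apply: eq_bigr => q _; rewrite act_unit mulr1 mulrC g3.
by rewrite -(addf_sum (fun a b => g2 _ a b)) Delta_counitl.
Qed.

Lemma smul_catr x y z : smeq (smul x (y ++ z)) (smul x y ++ smul x z).
Proof.
apply: smeq_by_tsum => G g _; rewrite tsum_cat !tsum_smul -big_split.
by apply: eq_bigr => p _; rewrite big_cat.
Qed.

(** * (R # U) (x)_R (R # U) as R (x)_A U (x)_A U *)

Definition balanced_RUU (G : zmodType) (H : R -> U -> U -> G) :=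
  [/\ (forall r r' u v, H (r + r') u v = H r u v + H r' u v),
      (forall r u u' v, H r (u + u') v = H r u v + H r u' v),
      (forall r u v v', H r u (v + v') = H r u v + H r u v'),
      (forall a r u v, H (amap a * r) u v = H r (s a * u) v) &
      (forall a r u v, H r (s a * u) v = H r u (s a * v))].

Definition balanced_SS (G : zmodType) (f : seq (R * U) -> seq (R * U) -> G) :=
  balanced2 (ceq SR) (ceq SR) (cadd SR) (cadd SR) (@lmulB _ SR) (@lmulB _ SR) f.

Definition ruu_map (G : zmodType) (H : R -> U -> U -> G) (x y : seq (R * U)) :=
  \sum_(p <- x) \sum_(p' <- y) H (p.1 * p'.1) p.2 p'.2.

Definition ruu_restr (G : zmodType) (f : seq (R * U) -> seq (R * U) -> G) r u v :=
  f [:: (r, u)] [:: (1, v)].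

Lemma balanced_RUU_UU (G : zmodType) (H : R -> U -> U -> G) r :
  balanced_RUU H -> balanced_UU (H r).
Proof. by case=> _ h2 h3 h4 h5; split. Qed.

Lemma balanced_RUU_UUU (G : zmodType) (H : R -> U -> U -> G) r r' : balanced_RUU H ->
  balanced_UUU (fun x y z => H (r * act x r') y z).
Proof.
case=> h1 h2 h3 h4 h5; split=> [x x' y z|x y y' z|x y z z'|a x y z|a x y z] //.
- by rewrite act_addl mulrDr h1.
- by rewrite act_srcl mulrA (mulrC r) -mulrA h4.
Qed.

Section RUUMap.
Variables (G : zmodType) (H : R -> U -> U -> G).
Hypothesis Hbal : balanced_RUU H.

Lemma ruu_map_eql x x' y : smeq x x' -> ruu_map H x y = ruu_map H x' y.
Proof.
have [h1 h2 h3 h4 h5] := Hbal.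
move=> Hx; apply: (tsum_smeq Hx (g := fun r u => \sum_(p' <- y) H (r * p'.1) u p'.2)).
split=> [r r' u|r u u'|a r u]; rewrite -?big_split; apply: eq_bigr => p' _.
- by rewrite mulrDl h1.
- by rewrite h2.
- by rewrite -mulrA h4.
Qed.

Lemma ruu_map_eqr x y y' : smeq y y' -> ruu_map H x y = ruu_map H x y'.
Proof.
have [h1 h2 h3 h4 h5] := Hbal.
move=> Hy; rewrite /ruu_map exchange_big [RHS]exchange_big.
apply: (tsum_smeq Hy (g := fun r v => \sum_(p <- x) H (p.1 * r) p.2 v)).
split=> [r r' u|r u u'|a r u]; rewrite -?big_split; apply: eq_bigr => p _.
- by rewrite mulrDr h1.
- by rewrite h3.
- by rewrite mulrA (mulrC _ (amap a)) -mulrA h4 h5.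
Qed.

Lemma ruu_map_balanced : balanced_SS (ruu_map H).
Proof.
split=> /=; [exact: ruu_map_eql|exact: ruu_map_eqr| | |].
- by move=> x x' y; rewrite /ruu_map big_cat.
- by move=> x y y'; rewrite /ruu_map -big_split; apply: eq_bigr => p _; rewrite big_cat.
move=> r x y; rewrite (ruu_map_eql _ (smul_scalarl r x)) (ruu_map_eqr _ (smul_scalarl r y)).
rewrite /ruu_map big_map; apply: eq_bigr => p _; rewrite big_map; apply: eq_bigr => p' _ /=.
by rewrite mulrA (mulrC r) -mulrA.
Qed.

Lemma ruu_map_seq1 r u r' v : ruu_map H [:: (r, u)] [:: (r', v)] = H (r * r') u v.
Proof. by rewrite /ruu_map !big_seq1. Qed.

Lemma ruu_map_smull x y z : ruu_map H (smul x y) z =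
  \sum_(p <- x) \sum_(p' <- y) \sum_(q <- Delta p.2)
     \sum_(p'' <- z) H (p.1 * act q.1 p'.1 * p''.1) (q.2 * p'.2) p''.2.
Proof. by rewrite /ruu_map big_smul. Qed.

Lemma ruu_map_smulr x y z : ruu_map H x (smul y z) =
  \sum_(p <- x) \sum_(p' <- y) \sum_(p'' <- z) \sum_(q <- Delta p'.2)
     H (p.1 * (p'.1 * act q.1 p''.1)) p.2 (q.2 * p''.2).
Proof. by rewrite /ruu_map; apply: eq_bigr => p _; rewrite big_smul. Qed.

Lemma ruu_map_smul_counit rho w a b :
  \sum_(d <- Delta a) H (rho * (1 * act d.1 1)) w (d.2 * b) = H rho w (a * b).
Proof.
have [h1 h2 h3 h4 h5] := Hbal.
transitivity (\sum_(d <- Delta a) H rho w (s (eps d.1) * d.2 * b)).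
  by apply: eq_bigr => d _; rewrite act_unit mul1r mulrC h4 h5 mulrA.
by rewrite -(addf_sum (fun y z => h3 _ _ y z)) -mulr_suml Delta_counitl.
Qed.

End RUUMap.

Section RUURestr.
Variables (G : zmodType) (f : seq (R * U) -> seq (R * U) -> G).
Hypothesis fbal : balanced_SS f.

Lemma ruu_restr_balanced : balanced_RUU (ruu_restr f).
Proof.
case: fbal => f1 f2 f3 f4 f5; rewrite /ruu_restr.
split=> [r r' u v|r u u' v|r u v v'|a r u v|a r u v].
- by rewrite (f1 _ _ _ (smeq_addl r r' u)) -f3.
- by rewrite (f1 _ _ _ (smeq_addr r u u')) -f3.
- by rewrite (f2 _ _ _ (smeq_addr 1 v v')) -f4.
- by rewrite (f1 _ _ _ (smeq_bal a r u)).
rewrite -(f1 _ _ _ (smeq_bal a r u)) -(f1 _ _ _ (smul_scalarl _ [:: (r, u)])) f5.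
by rewrite (f2 _ _ _ (smeq_scalar_src 1 a v)).
Qed.

Lemma ruu_restrK x y : f x y = ruu_map (ruu_restr f) x y.
Proof.
case: fbal => f1 f2 f3 f4 f5.
rewrite (biadditive_expand f3 f4) /ruu_map.
apply: eq_bigr => -[r u] _; apply: eq_bigr => -[r' v] _ /=.
have E1 : smeq (smul [:: (r', 1)] [:: (1, v)]) [:: (r', v)].
  by apply: smeq_trans (smul_scalarl _ _) _; rewrite /= mulr1.
have E2 : smeq (smul [:: (r', 1)] [:: (r, u)]) [:: (r * r', u)].
  by apply: smeq_trans (smul_scalarl _ _) _; rewrite /= mulrC.
by rewrite -(f2 _ _ _ E1) -f5 (f1 _ _ _ E2).
Qed.

End RUURestr.

Lemma teqS_by_tsum X Y :
  (forall (G : zmodType) (H : R -> U -> U -> G), balanced_RUU H ->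
     tsum (ruu_map H) X = tsum (ruu_map H) Y) ->
  teqS X Y.
Proof.
move=> HXY G f fbal.
have E Z : \sum_(p <- Z) f p.1 p.2 = tsum (ruu_map (ruu_restr f)) Z.
  by apply: eq_bigr => p _; rewrite (ruu_restrK fbal).
by rewrite !E; apply/HXY/ruu_restr_balanced.
Qed.

Lemma tsum_teqS X Y (G : zmodType) (H : R -> U -> U -> G) :
  teqS X Y -> balanced_RUU H -> tsum (ruu_map H) X = tsum (ruu_map H) Y.
Proof. by move=> HXY Hbal; apply/HXY/ruu_map_balanced. Qed.

Lemma big_smash_Delta (G : zmodType) (F : seq (R * U) * seq (R * U) -> G) x :
  \sum_(z <- sDelta x) F z =
  \sum_(p <- x) \sum_(q <- Delta p.2) F ([:: (p.1, q.1)], [:: (1, q.2)]).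
Proof.
by rewrite /smash_Delta big_flatten big_map; apply: eq_bigr => p _; rewrite big_map.
Qed.

Lemma tsum_smash_Delta (G : zmodType) (H : R -> U -> U -> G) x :
  tsum (ruu_map H) (sDelta x) = \sum_(p <- x) \sum_(q <- Delta p.2) H p.1 q.1 q.2.
Proof.
rewrite /tsum big_smash_Delta; apply: eq_bigr => p _.
by apply: eq_bigr => q _; rewrite ruu_map_seq1 mulr1.
Qed.

Lemma smash_Delta_eq x y : smeq x y -> teqS (sDelta x) (sDelta y).
Proof.
move=> Hx; apply: teqS_by_tsum => G H Hbal; have [h1 h2 h3 h4 h5] := Hbal.
rewrite !tsum_smash_Delta.
apply: (tsum_smeq Hx (g := fun r u => \sum_(q <- Delta u) H r q.1 q.2)).
split=> [r r' u|r u u'|a r u].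
- by rewrite -big_split; apply: eq_bigr => q _; rewrite h1.
- exact: (tsum_DeltaD (balanced_RUU_UU r Hbal)).
- have := tsum_Delta_srcl (balanced_RUU_UU r Hbal) a u; rewrite /tsum => ->.
  by apply: eq_bigr => q _; rewrite h4.
Qed.

Lemma smash_Delta_linl a x :
  teqS (sDelta (smul [:: (a, 1)] x)) [seq (smul [:: (a, 1)] p.1, p.2) | p <- sDelta x].
Proof.
apply: teqS_by_tsum => G H Hbal.
rewrite (tsum_teqS (smash_Delta_eq (smul_scalarl a x)) Hbal) tsum_smash_Delta big_map.
rewrite /tsum big_map big_smash_Delta; apply: eq_bigr => p _; apply: eq_bigr => q _ /=.
by rewrite (ruu_map_eql Hbal _ (smul_scalarl _ _)) /= ruu_map_seq1 mulr1.
Qed.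

Lemma smash_Delta_linr a x :
  teqS (sDelta (smul [:: (a, 1)] x)) [seq (p.1, smul [:: (a, 1)] p.2) | p <- sDelta x].
Proof.
apply: teqS_by_tsum => G H Hbal.
rewrite (tsum_teqS (smash_Delta_eq (smul_scalarl a x)) Hbal) tsum_smash_Delta big_map.
rewrite /tsum big_map big_smash_Delta; apply: eq_bigr => p _; apply: eq_bigr => q _ /=.
by rewrite (ruu_map_eqr Hbal _ (smul_scalarl _ _)) /= ruu_map_seq1 mulr1 mulrC.
Qed.

Lemma smash_Delta_takeuchi a x :
  teqS [seq (smul p.1 [:: (a, 1)], p.2) | p <- sDelta x]
       [seq (p.1, smul p.2 [:: (a, 1)]) | p <- sDelta x].
Proof.
apply: teqS_by_tsum => G H Hbal.
rewrite /tsum !big_map !big_smash_Delta; apply: eq_bigr => p _ /=.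
under eq_bigr do rewrite ruu_map_smull !big_seq1 /=.
under [RHS]eq_bigr do rewrite ruu_map_smulr !big_seq1 /=.
have Phi_bal := balanced_RUU_UUU p.1 a Hbal.
transitivity (\sum_(q <- Delta p.2) \sum_(c <- Delta q.1)
   (fun x y z => H (p.1 * act x a) y z) c.1 c.2 q.2).
  by apply: eq_bigr => q _; apply: eq_bigr => c _; rewrite big_seq1 /= !mulr1.
rewrite (Delta_coassoc _ Phi_bal) (Delta_coassoc_swap _ Phi_bal).
by apply: eq_bigr => q _; apply: eq_bigr => c _; rewrite !mulr1 mul1r.
Qed.

Lemma smash_Delta_coassoc x :
  @teq3D _ SR [seq (q.1, q.2, p.2) | p <- sDelta x, q <- sDelta p.1]
              [seq (p.1, q.1, q.2) | p <- sDelta x, q <- sDelta p.2].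
Proof.
move=> G f [e1 [e2 [e3 [a1 [a2 [a3 [m1 m2]]]]]]] /=.
rewrite !big_flatten !big_map !big_smash_Delta; apply: eq_bigr => p _.
under eq_bigr do rewrite big_map /= big_smash_Delta big_seq1 /=.
under [RHS]eq_bigr do rewrite big_map /= big_smash_Delta big_seq1 /=.
pose Phi a b c := f [:: (p.1, a)] [:: (1, b)] [:: (1, c)].
have Phi_bal : balanced_UUU Phi.
  rewrite /Phi; split=> [x0 x1 y0 z0|x0 y0 y1 z0|x0 y0 z0 z1|k x0 y0 z0|k x0 y0 z0].
  - by rewrite (e1 _ _ _ _ (smeq_addr _ _ _)) -a1.
  - by rewrite (e2 _ _ _ _ (smeq_addr _ _ _)) -a2.
  - by rewrite (e3 _ _ _ _ (smeq_addr _ _ _)) -a3.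
  - by rewrite (e1 _ _ _ _ (smeq_scalar_src _ _ _)) m1 -(e2 _ _ _ _ (smeq_scalar_src _ _ _)).
  - by rewrite (e2 _ _ _ _ (smeq_scalar_src _ _ _)) m2 -(e3 _ _ _ _ (smeq_scalar_src _ _ _)).
exact: (Delta_coassoc p.2 Phi_bal).
Qed.

Lemma smash_Delta_mul x y :
  teqS (sDelta (smul x y)) [seq (smul p.1 q.1, smul p.2 q.2) | p <- sDelta x, q <- sDelta y].
Proof.
apply: teqS_by_tsum => G H Hbal; have [h1 h2 h3 h4 h5] := Hbal.
rewrite tsum_smash_Delta big_smul /tsum big_flatten big_map big_smash_Delta.
apply: eq_bigr => p _.
under [RHS]eq_bigr do rewrite big_map big_smash_Delta /=.
rewrite [RHS]exchange_big; apply: eq_bigr => p' _ /=.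
under [RHS]eq_bigr do (under eq_bigr do
  (rewrite /ruu_map big_smul !big_seq1; under eq_bigr do
     rewrite big_smul !big_seq1 (ruu_map_smul_counit Hbal))).
set r := p.1; set u := p.2; set r' := p'.1; set v := p'.2.
pose Phi x y z := \sum_(b <- Delta v) H (r * act x r') (y * b.1) (z * b.2).
have Phi_bal : balanced_UUU Phi.
  split=> [x0 x1 y0 z0|x0 y0 y1 z0|x0 y0 z0 z1|k x0 y0 z0|k x0 y0 z0];
    rewrite /Phi -?big_split; apply: eq_bigr => b _.
  - by rewrite act_addl mulrDr h1.
  - by rewrite mulrDl h2.
  - by rewrite mulrDl h3.
  - by rewrite act_srcl mulrA (mulrC r) -(mulrA (amap k)) h4 mulrA.
  - by rewrite -!mulrA h5.
transitivity (\sum_(q <- Delta u) \sum_(a <- Delta q.2) Phi q.1 a.1 a.2).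
  apply: eq_bigr => q _.
  exact: (tsum_DeltaM (balanced_RUU_UU (r * act q.1 r') Hbal)).
rewrite -(Delta_coassoc _ Phi_bal); apply: eq_bigr => a _.
by rewrite exchange_big; apply: eq_bigr => c _; apply: eq_bigr => b _ /=.
Qed.

Lemma smash_Delta_one : teqS (sDelta [:: (1, 1)]) [:: ([:: (1, 1)], [:: (1, 1)])].
Proof.
apply: teqS_by_tsum => G H Hbal.
rewrite tsum_smash_Delta big_seq1 tsum_seq1 ruu_map_seq1 mulr1.
exact: (tsum_Delta1 (balanced_RUU_UU 1 Hbal)).
Qed.

Lemma smash_Delta_cocomm x : teqS [seq (p.2, p.1) | p <- sDelta x] (sDelta x).
Proof.
apply: teqS_by_tsum => G H Hbal.
rewrite tsum_smash_Delta /tsum big_map big_smash_Delta; apply: eq_bigr => p _.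
have := Delta_cocomm (balanced_RUU_UU p.1 Hbal) p.2; rewrite /tsum => <-.
by apply: eq_bigr => q _; rewrite ruu_map_seq1 mul1r.
Qed.

Definition eps_RU (r : R) (u : U) : R := act (s (eps u)) r.

Lemma eps_RU_balanced : balanced_RU eps_RU.
Proof.
rewrite /eps_RU; split=> [r r' u|r u u'|a r u]; first by rewrite act_addr.
  by rewrite epsD srcD act_addl.
by rewrite !act_src eps_srcl amapM mulrA (mulrC (amap a)).
Qed.

Lemma smash_epsE x : seps x = tsum eps_RU x. Proof. by []. Qed.

Lemma smash_eps_lin a x : seps (smul [:: (a, 1)] x) = a * seps x.
Proof.
rewrite !smash_epsE (tsum_smeq (smul_scalarl a x) eps_RU_balanced).
rewrite /tsum big_map mulr_sumr.
by apply: eq_bigr => p _; rewrite /eps_RU !act_src mulrCA.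
Qed.

Lemma smash_eps_mul x y : seps (smul x y) = seps (smul x [:: (seps y, 1)]).
Proof.
rewrite !smash_epsE !tsum_smul; apply: eq_bigr => p _; rewrite big_seq1 /=.
transitivity (\sum_(p' <- y) \sum_(q <- Delta p.2)
   amap (eps q.2) * (p.1 * act q.1 (amap (eps p'.2) * p'.1))).
  apply: eq_bigr => p' _.
  pose Phi (x z : U) := amap (eps z) * (p.1 * act x p'.1).
  have Phi_bal : balanced_UU Phi.
    rewrite /Phi; split=> [x0 x1 z|x2 z0 z1|a x2 z].
    - by rewrite act_addl !mulrDr.
    - by rewrite epsD amapD mulrDl.
    - by rewrite act_srcl eps_srcl amapM; ring.
  transitivity (\sum_(q <- Delta p.2) Phi q.1 (q.2 * s (eps p'.2))).
    by apply: eq_bigr => q _; rewrite /Phi /eps_RU act_src eps_mul.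
  rewrite -(Delta_takeuchi Phi_bal).
  by apply: eq_bigr => q _; rewrite /Phi act_srcr.
rewrite exchange_big; apply: eq_bigr => q _ /=.
rewrite /eps_RU mulr1 act_src act_sumr !mulr_sumr; apply: eq_bigr => p' _.
by rewrite act_src.
Qed.

Lemma tsum_vsum (G : zmodType) (g : R -> U -> G) (l : seq (seq (R * U))) :
  tsum g (@vsum _ SR l) = \sum_(z <- l) tsum g z.
Proof.
elim: l => [|a l IH]; first by rewrite big_nil /tsum big_nil.
by rewrite big_cons /= tsum_cat IH.
Qed.

Lemma smash_counitl x :
  smeq (@vsum _ SR [seq smul [:: (seps p.1, 1)] p.2 | p <- sDelta x]) x.
Proof.
apply: smeq_by_tsum => G g gbal; have [g1 g2 g3] := gbal.
rewrite tsum_vsum big_map big_smash_Delta; apply: eq_bigr => p _ /=.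
transitivity (\sum_(q <- Delta p.2) g p.1 (s (eps q.1) * q.2)).
  apply: eq_bigr => q _; rewrite (tsum_smeq (smul_scalarl _ _) gbal) /= tsum_seq1.
  by rewrite /smash_eps big_seq1 act_src mulr1 g3.
by rewrite -(addf_sum (fun a b => g2 _ a b)) Delta_counitl.
Qed.

Lemma smash_counitr x :
  smeq (@vsum _ SR [seq smul [:: (seps p.2, 1)] p.1 | p <- sDelta x]) x.
Proof.
apply: smeq_by_tsum => G g gbal; have [g1 g2 g3] := gbal.
rewrite tsum_vsum big_map big_smash_Delta; apply: eq_bigr => p _ /=.
transitivity (\sum_(q <- Delta p.2) g p.1 (s (eps q.2) * q.1)).
  apply: eq_bigr => q _; rewrite (tsum_smeq (smul_scalarl _ _) gbal) /= tsum_seq1.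
  by rewrite /smash_eps big_seq1 act_src mulr1 g3.
by rewrite -(addf_sum (fun a b => g2 _ a b)) Delta_counitr.
Qed.

Lemma smash_bialgebroid : cocomm_bialgebroid SR.
Proof.
split=> /=.
- exact: smeq_refl.
- exact: smeq_sym.
- exact: smeq_trans.
- exact: smeq_cat.
- exact: smeq_opp.
- exact: smul_eq.
- by move=> x y z; rewrite catA.
- exact: smeq_catC.
- by [].
- exact: smeq_catN.
- exact: smulA.
- exact: smul1l.
- exact: smul1r.
- by move=> x y z; rewrite /smash_mul map_cat flatten_cat.
- exact: smul_catr.
- by move=> a b; apply: smeq_addl.
- by move=> a b; apply: smeq_sym; apply: smeq_trans (smul_scalarl _ _) _.
- by [].
- exact: smash_Delta_eq.
- by move=> x y; rewrite /smash_Delta map_cat flatten_cat.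
- exact: smash_Delta_linl.
- exact: smash_Delta_linr.
- exact: smash_Delta_takeuchi.
- exact: smash_Delta_coassoc.
- exact: smash_Delta_mul.
- exact: smash_Delta_one.
- exact: smash_Delta_cocomm.
- by move=> x y Hx; rewrite !smash_epsE (tsum_smeq Hx eps_RU_balanced).
- by move=> x y; rewrite /smash_eps big_cat.
- exact: smash_eps_lin.
- by rewrite /smash_eps big_seq1 /= eps1 src1 act1.
- exact: smash_eps_mul.
- exact: smash_counitl.
- exact: smash_counitr.
Qed.

(** * The Galois map of R # U *)

Definition balanced_RUUop (G : zmodType) (H : R -> U -> U -> G) :=
  [/\ (forall r r' u v, H (r + r') u v = H r u v + H r' u v),
      (forall r u u' v, H r (u + u') v = H r u v + H r u' v),
      (forall r u v v', H r u (v + v') = H r u v + H r u v'),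
      (forall a r u v, H (amap a * r) u v = H r (s a * u) v) &
      (forall a r u v, H r (u * s a) v = H r u (s a * v))].

Definition balanced_SSop (G : zmodType) (f : seq (R * U) -> seq (R * U) -> G) :=
  balanced2 (ceq SR) (ceq SR) (cadd SR) (cadd SR) (@rmulB _ SR) (@lmulB _ SR) f.

Definition ruuop_map (G : zmodType) (H : R -> U -> U -> G) (x y : seq (R * U)) :=
  \sum_(p <- x) \sum_(p' <- y) \sum_(q <- Delta p.2) H (p.1 * act q.1 p'.1) q.2 p'.2.

Lemma balanced_RUUop_UU (G : zmodType) (H : R -> U -> U -> G) c r' v :
  balanced_RUUop H -> balanced_UU (fun x y => H (c * act x r') y v).
Proof.
case=> h1 h2 h3 h4 h5; split=> [x x' y|x y y'|a x y]; rewrite ?act_addl ?mulrDr ?h1 ?h2 //.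
by rewrite act_srcl mulrA (mulrC c) -mulrA h4.
Qed.

Section RUUopMap.
Variables (G : zmodType) (H : R -> U -> U -> G).
Hypothesis Hbal : balanced_RUUop H.

Lemma ruuop_map_eql x x' y : smeq x x' -> ruuop_map H x y = ruuop_map H x' y.
Proof.
have [h1 h2 h3 h4 h5] := Hbal.
move=> Hx; apply: (tsum_smeq Hx (g := fun r u =>
  \sum_(p' <- y) \sum_(q <- Delta u) H (r * act q.1 p'.1) q.2 p'.2)).
split=> [r r' u|r u u'|a r u]; rewrite -?big_split; apply: eq_bigr => p' _.
- by rewrite -big_split; apply: eq_bigr => q _; rewrite mulrDl h1.
- exact: (tsum_DeltaD (balanced_RUUop_UU r p'.1 p'.2 Hbal)).
- have := tsum_Delta_srcl (balanced_RUUop_UU r p'.1 p'.2 Hbal) a u.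
  rewrite /tsum /= => ->.
  by apply: eq_bigr => q _; rewrite act_srcl mulrA (mulrC r).
Qed.

Lemma ruuop_map_eqr x y y' : smeq y y' -> ruuop_map H x y = ruuop_map H x y'.
Proof.
have [h1 h2 h3 h4 h5] := Hbal.
move=> Hy; rewrite /ruuop_map exchange_big [RHS]exchange_big.
apply: (tsum_smeq Hy (g := fun r v =>
  \sum_(p <- x) \sum_(q <- Delta p.2) H (p.1 * act q.1 r) q.2 v)).
split=> [r r' u|r u u'|a r u]; rewrite -?big_split; apply: eq_bigr => p _.
- by rewrite -big_split; apply: eq_bigr => q _; rewrite act_addr mulrDr h1.
- by rewrite -big_split; apply: eq_bigr => q _; rewrite h3.
- under eq_bigr do rewrite -act_srcr.
  have /= -> := Delta_takeuchi (balanced_RUUop_UU p.1 r u Hbal) a p.2.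
  by apply: eq_bigr => q _; rewrite h5.
Qed.

Lemma ruuop_map_bal r x y :
  ruuop_map H (smul x [:: (r, 1)]) y = ruuop_map H x (smul [:: (r, 1)] y).
Proof.
have [h1 h2 h3 h4 h5] := Hbal.
rewrite (ruuop_map_eqr _ (smul_scalarl r y)) /ruuop_map big_smul.
apply: eq_bigr => p _; rewrite big_seq1 big_map /= exchange_big.
apply: eq_bigr => p' _ /=.
set r0 := p.1; set r' := p'.1; set v := p'.2.
pose Phi x y z := H (r0 * act x r * act y r') z v.
have Phi_bal : balanced_UUU Phi.
  split=> [x0 x1 y0 z0|x0 y0 y1 z0|x0 y0 z0 z1|k x0 y0 z0|k x0 y0 z0]; rewrite /Phi.
  - by rewrite act_addl mulrDr mulrDl h1.
  - by rewrite act_addl mulrDr h1.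
  - by rewrite h2.
  - by rewrite !act_srcl -!mulrA; congr (H (_ * _) _ _); rewrite mulrCA.
  - by rewrite act_srcl mulrCA h4.
transitivity (\sum_(q <- Delta p.2) \sum_(c <- Delta q.2) Phi q.1 c.1 c.2).
  by apply: eq_bigr => q _; rewrite mulr1.
rewrite -(Delta_coassoc _ Phi_bal); apply: eq_bigr => q _.
rewrite act_rmul mulr_sumr (addf_sum (fun a b => h1 a b _ _)); apply: eq_bigr => e _.
by rewrite /Phi mulrA.
Qed.

Lemma ruuop_map_balanced : balanced_SSop (ruuop_map H).
Proof.
split=> /=; [exact: ruuop_map_eql|exact: ruuop_map_eqr| | |exact: ruuop_map_bal].
- by move=> x x' y; rewrite /ruuop_map big_cat.
- by move=> x y y'; rewrite /ruuop_map -big_split; apply: eq_bigr => p _; rewrite big_cat.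
Qed.

Lemma ruuop_map_seq1 r u v : ruuop_map H [:: (r, u)] [:: (1, v)] = H r u v.
Proof.
have [h1 h2 h3 h4 h5] := Hbal; rewrite /ruuop_map !big_seq1 /=.
transitivity (\sum_(q <- Delta u) H r (s (eps q.1) * q.2) v).
  by apply: eq_bigr => q _; rewrite act_unit mulrC h4.
by rewrite -(addf_sum (fun a b => h2 _ a b _)) Delta_counitl.
Qed.

End RUUopMap.

Section RUUopRestr.
Variables (G : zmodType) (f : seq (R * U) -> seq (R * U) -> G).
Hypothesis fbal : balanced_SSop f.

Lemma ruuop_restr_balanced : balanced_RUUop (ruu_restr f).
Proof.
case: fbal => f1 f2 f3 f4 f5; rewrite /ruu_restr.
split=> [r r' u v|r u u' v|r u v v'|a r u v|a r u v].
- by rewrite (f1 _ _ _ (smeq_addl r r' u)) -f3.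
- by rewrite (f1 _ _ _ (smeq_addr r u u')) -f3.
- by rewrite (f2 _ _ _ (smeq_addr 1 v v')) -f4.
- by rewrite (f1 _ _ _ (smeq_bal a r u)).
have f5' c x y : f (smul x [:: (c, 1)]) y = f x (smul [:: (c, 1)] y) := f5 c x y.
by rewrite -(f1 _ _ _ (smul_scalarr r u a)) f5' -(f2 _ _ _ (smeq_scalar_src 1 a v)).
Qed.

Lemma ruuop_restrK x y : f x y = ruuop_map (ruu_restr f) x y.
Proof.
case: fbal => f1 f2 f3 f4 f5.
rewrite (biadditive_expand f3 f4) /ruuop_map.
apply: eq_bigr => -[r u] _; apply: eq_bigr => -[r' v] _ /=.
have E : smeq (smul [:: (r', 1)] [:: (1, v)]) [:: (r', v)].
  by apply: smeq_trans (smul_scalarl _ _) _; rewrite /= mulr1.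
rewrite -(f2 _ _ _ E) -f5 (biadditive_expand f3 f4) big_smul !big_seq1 /=.
by apply: eq_bigr => q _; rewrite big_seq1 mulr1.
Qed.

End RUUopRestr.

Lemma teqSop_by_tsum X Y :
  (forall (G : zmodType) (H : R -> U -> U -> G), balanced_RUUop H ->
     tsum (ruuop_map H) X = tsum (ruuop_map H) Y) ->
  teqSop X Y.
Proof.
move=> HXY G f fbal.
have E Z : \sum_(p <- Z) f p.1 p.2 = tsum (ruuop_map (ruu_restr f)) Z.
  by apply: eq_bigr => p _; rewrite (ruuop_restrK fbal).
by rewrite !E; apply/HXY/ruuop_restr_balanced.
Qed.

Lemma tsum_teqSop X Y (G : zmodType) (H : R -> U -> U -> G) :
  teqSop X Y -> balanced_RUUop H -> tsum (ruuop_map H) X = tsum (ruuop_map H) Y.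
Proof. by move=> HXY Hbal; apply/HXY/ruuop_map_balanced. Qed.

(* H o (R (x)_A beta_U) *)
Definition beta_comp (G : zmodType) (H : R -> U -> U -> G) r u v :=
  \sum_(c <- Delta u) H r c.1 (c.2 * v).

Lemma beta_comp_balanced (G : zmodType) (H : R -> U -> U -> G) :
  balanced_RUU H -> balanced_RUUop (beta_comp H).
Proof.
move=> Hbal; have [h1 h2 h3 h4 h5] := Hbal.
have Hv_bal r v : balanced_UU (fun x y => H r x (y * v)).
  by split=> [x x' y|x y y'|a x y]; rewrite ?h2 ?mulrDl ?h3 // h5 mulrA.
split=> [r r' u v|r u u' v|r u v v'|a r u v|a r u v]; rewrite /beta_comp.
- by rewrite -big_split; apply: eq_bigr => c _; rewrite h1.
- exact: (tsum_DeltaD (Hv_bal r v)).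
- by rewrite -big_split; apply: eq_bigr => c _; rewrite mulrDr h3.
- have := tsum_Delta_srcl (Hv_bal r v) a u; rewrite /tsum /= => ->.
  by apply: eq_bigr => c _; rewrite h4.
have := tsum_Delta_srcr a u (Hv_bal r v); rewrite /tsum /= => ->.
have /= -> := Delta_takeuchi (Hv_bal r v) a u.
by apply: eq_bigr => c _; rewrite mulrA.
Qed.

Lemma tsum_beta (G : zmodType) (H : R -> U -> U -> G) w : balanced_RUU H ->
  tsum (ruu_map H) (betaS w) = tsum (ruuop_map (beta_comp H)) w.
Proof.
move=> Hbal; have [h1 h2 h3 h4 h5] := Hbal.
rewrite /tsum /beta big_flatten big_map; apply: eq_bigr => -[x y] _ /=.
rewrite big_map big_smash_Delta /ruuop_map; apply: eq_bigr => a _ /=.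
under eq_bigr do rewrite ruu_map_smulr !big_seq1 /=.
rewrite exchange_big; apply: eq_bigr => b _ /=.
pose Phi x y z := H (a.1 * act x b.1) y (z * b.2).
have Phi_bal : balanced_UUU Phi.
  split=> [x0 x1 y0 z0|x0 y0 y1 z0|x0 y0 z0 z1|k x0 y0 z0|k x0 y0 z0]; rewrite /Phi.
  - by rewrite act_addl mulrDr h1.
  - by rewrite h2.
  - by rewrite mulrDl h3.
  - by rewrite act_srcl mulrA (mulrC a.1) -mulrA h4.
  - by rewrite h5 mulrA.
transitivity (\sum_(q <- Delta a.2) \sum_(c <- Delta q.2) Phi c.1 q.1 c.2).
  by apply: eq_bigr => q _; apply: eq_bigr => c _; rewrite /Phi mul1r.
by rewrite -(Delta_coassoc_swap _ Phi_bal) /beta_comp.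
Qed.

Lemma smash_beta_eq w w' : teqSop w w' -> teqS (betaS w) (betaS w').
Proof.
move=> Hw; apply: teqS_by_tsum => G H Hbal.
by rewrite !tsum_beta //; apply: (tsum_teqSop Hw); apply: beta_comp_balanced.
Qed.

Section Hopf.
Hypothesis Hh : cocomm_hopf DU.

Definition beta_preimage u v : seq (U * U) :=
  proj1_sig (constructive_indefinite_description _ (hopf_beta_surj Hh [:: (u, v)])).

Lemma beta_preimageP u v : teqU (betaU (beta_preimage u v)) [:: (u, v)].
Proof. exact: proj2_sig (constructive_indefinite_description _ (hopf_beta_surj Hh _)). Qed.

Lemma tsum_betaU_inj L L' (G : zmodType) (f : U -> U -> G) :
  teqU (betaU L) (betaU L') -> balanced_UUop f -> tsum f L = tsum f L'.
Proof. by move=> E; apply: tsum_teqUop; apply: (hopf_beta_inj Hh). Qed.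

(* H' o (R (x)_A beta_U^-1) *)
Definition beta_inv_comp (G : zmodType) (H' : R -> U -> U -> G) r u v :=
  tsum (H' r) (beta_preimage u v).

Lemma beta_inv_comp_balanced (G : zmodType) (H' : R -> U -> U -> G) :
  balanced_RUUop H' -> balanced_RUU (beta_inv_comp H').
Proof.
case=> k1 k2 k3 k4 k5.
have Hr r : balanced_UUop (H' r) by split.
split=> [r r' u v|r u u' v|r u v v'|a r u v|a r u v]; rewrite /beta_inv_comp.
- by rewrite /tsum -big_split; apply: eq_bigr => z _; rewrite k1.
- rewrite -tsum_cat; apply: (tsum_betaU_inj _ (Hr r)); rewrite betaU_cat.
  apply: teqU_trans (beta_preimageP _ _) _; apply: teqU_trans (teqU_addl _ _ _) _.
  by apply: teqU_sym; apply: (teqU_cat (beta_preimageP _ _) (beta_preimageP _ _)).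
- rewrite -tsum_cat; apply: (tsum_betaU_inj _ (Hr r)); rewrite betaU_cat.
  apply: teqU_trans (beta_preimageP _ _) _; apply: teqU_trans (teqU_addr _ _ _) _.
  by apply: teqU_sym; apply: (teqU_cat (beta_preimageP _ _) (beta_preimageP _ _)).
- transitivity (tsum (H' r) (lscale a (beta_preimage u v))).
    by rewrite /tsum /lscale big_map; apply: eq_bigr => z _; rewrite k4.
  apply: (tsum_betaU_inj _ (Hr r)); apply: teqU_trans (betaU_lscale _ _) _.
  apply: teqU_trans (lscale_teqU a (beta_preimageP u v)) _.
  exact: teqU_sym (beta_preimageP _ _).
apply: (tsum_betaU_inj _ (Hr r)); apply: teqU_trans (beta_preimageP _ _) _.
by apply: teqU_trans (teqU_bal _ _ _) _; apply: teqU_sym; apply: beta_preimageP.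
Qed.

Lemma beta_inv_compK (G : zmodType) (H' : R -> U -> U -> G) r u v :
  balanced_RUUop H' -> beta_comp (beta_inv_comp H') r u v = H' r u v.
Proof.
move=> Hbal; have Hr : balanced_UUop (H' r) by case: Hbal; split.
transitivity (tsum (H' r) (flatten [seq beta_preimage c.1 (c.2 * v) | c <- Delta u])).
  by rewrite /tsum big_flatten big_map.
rewrite (tsum_betaU_inj (L' := [:: (u, v)]) _ Hr); first exact: tsum_seq1.
apply: teqU_trans (betaU_flatten (Gs := fun c => [:: (c.1, c.2 * v)]) _
  (fun c => beta_preimageP _ _)) _.
apply: teqU_by_tsum => G' f fbal.
rewrite tsum_betaU big_seq1 /tsum big_flatten big_map.
by apply: eq_bigr => c _; rewrite big_seq1.
Qed.

Lemma smash_beta_inj w w' :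
  teqS (betaS w) (betaS w') -> teqSop w w'.
Proof.
move=> Hbw; apply: teqSop_by_tsum => G H' Hbal.
have Hinv := beta_inv_comp_balanced Hbal.
have E X : tsum (ruuop_map H') X = tsum (ruuop_map (beta_comp (beta_inv_comp H'))) X.
  rewrite /tsum /ruuop_map; apply: eq_bigr => z _; apply: eq_bigr => p _.
  by apply: eq_bigr => p' _; apply: eq_bigr => q _; rewrite beta_inv_compK.
by rewrite !E -!(tsum_beta _ Hinv); apply: tsum_teqS.
Qed.

Lemma smash_beta_surj z : exists w, teqS (betaS w) z.
Proof.
exists (flatten [seq flatten [seq flatten [seq
  [seq ([:: (p.1 * p'.1, c.1)], [:: (1, c.2)]) | c <- beta_preimage p.2 p'.2]
  | p' <- z0.2] | p <- z0.1] | z0 <- z]).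
apply: teqS_by_tsum => G H Hbal; rewrite tsum_beta //.
have Hb := beta_comp_balanced Hbal.
rewrite /tsum big_flatten big_map; apply: eq_bigr => z0 _.
rewrite big_flatten big_map /ruu_map; apply: eq_bigr => p _.
rewrite big_flatten big_map; apply: eq_bigr => p' _.
rewrite big_map; under eq_bigr do rewrite /= (ruuop_map_seq1 Hb).
have := tsum_teqU (beta_preimageP p.2 p'.2) (balanced_RUU_UU (p.1 * p'.1) Hbal).
by rewrite tsum_betaU tsum_seq1.
Qed.

Lemma smash_hopf : cocomm_hopf SR.
Proof.
split; [exact: smash_bialgebroid|exact: smash_beta_eq|exact: smash_beta_inj|].
exact: smash_beta_surj.
Qed.

End Hopf.

End ModuleAlgebra.
End SmashProduct.

Unset Implicit Arguments.
Set Strict Implicit.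

Theorem lemma1p12 (A : comPzRingType) (U : pzRingType) (s : A -> U)
  (Delta : U -> seq (U * U)) (eps : U -> A) (R : comPzRingType)
  (act : U -> R -> R) :
  module_algebra s Delta eps act ->
  (cocomm_bialgebroid (ring_raw s Delta eps) ->
     cocomm_bialgebroid (smash_raw s Delta eps act)) /\
  (cocomm_hopf (ring_raw s Delta eps) ->
     cocomm_hopf (smash_raw s Delta eps act)).
Proof.
move=> Hma; split=> [HU|Hh]; first exact: smash_bialgebroid.
exact: (smash_hopf (hopf_bgd Hh) Hma Hh).
Qed.
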